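(* Let $\rho = (\mathcal{V}, V, \mathbf{1}, \mathrm{var}, \mathrm{low}, \mathrm{high}, \mathrm{flip})$ be a COBDD with $\mathcal V=\{x_1,\dots,x_n\}$, let $v_1, \ldots, v_r \in V$ be nodes and $b_1, \ldots, b_r \in \mathbb{B}$ flipping bits. Then the node-translation part of GenerateCCode$(\rho, v_1, b_1, \ldots, v_r, b_r)$ (namely: $W:=\emptyset$, then for $i=1,\dots,r$, $W :=$ Translate$(\rho, v_i, W)$) generates a sequence of labeled C statements $B_1 \ldots B_k$ such that $k = |\bigcup_{i=1}^r V_{v_i}|$ and for all $v \in \bigcup_{i=1}^r V_{v_i}$: (1) the label L_$v$ occurs in $B_j$ for some $j$; and (2) for every $b\in\mathbb B$, if execution is started at label L_$v$ with x[$j-1$] $= x_j$ for all $j \in\{1,\dots,n\}$ and ret_b $= \bar b$, then a statement ''return ret_b;'' is executed within $O(p)$ steps, with ret_b $= [\![ v, b]\!]$ evaluated at $(x_1,\dots,x_n)$, where $p = \mathrm{height}(v)$.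
   Context: $\mathbb{B}=\{0,1\}$. A COBDD is a tuple $\rho = (\mathcal{V}, V, \mathbf{1}, \mathrm{var}, \mathrm{low}, \mathrm{high}, \mathrm{flip})$ with $\mathcal V$ a finite totally ordered set of boolean variables, $V$ a finite set of nodes, $\mathbf 1\in V$ the terminal node, $\mathrm{var}: V\setminus\{\mathbf 1\}\to\mathcal V$, $\mathrm{high},\mathrm{low}: V\setminus\{\mathbf 1\}\to V$, $\mathrm{flip}: V\setminus\{\mathbf 1\}\to\mathbb B$, with variables strictly increasing along edges $v\to\mathrm{high}(v)$ and $v\to\mathrm{low}(v)$; COBDDs are assumed reduced (no internal $v$ with $\mathrm{low}(v)=\mathrm{high}(v)$ and $\mathrm{flip}(v)=0$, no two distinct nodes with isomorphic reachable sub-COBDDs). $V_v$ is the set of nodes reachable from $v$ (including $v$); $\mathrm{height}(v)$ is the length of the longest path from $v$ to $\mathbf 1$. Semantics: $[\![ \mathbf 1, b]\!] := \bar b$ and, for internal $v$ with $\mathrm{var}(v)=x_i$, $[\![ v,b]\!] := x_i [\![ \mathrm{high}(v), b]\!] + \bar x_i [\![ \mathrm{low}(v), b\oplus \mathrm{flip}(v)]\!]$. The procedure Translate$(\rho,v,W)$: if $v\in W$, return $W$ (printing nothing); otherwise set $W := W\cup\{v\}$; print the label ''L_$v$:''; if $v=\mathbf 1$, print ''return ret_b;''; otherwise, with $i$ such that $\mathrm{var}(v)=x_i$, print ''if (x[$i-1$] == 1) goto L_$\mathrm{high}(v)$;'' followed by ''else {ret_b = !ret_b; goto L_$\mathrm{low}(v)$;}''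 if $\mathrm{flip}(v)=1$ or ''else goto L_$\mathrm{low}(v)$;'' if $\mathrm{flip}(v)=0$, then set $W:=$ Translate$(\rho,\mathrm{high}(v),W)$ and then $W:=$ Translate$(\rho,\mathrm{low}(v),W)$; return $W$. Each node has a unique label L_$v$. Steps are counted as executed C statements. *)

From mathcomp Require Import all_boot.
Set Implicit Arguments. Unset Strict Implicit. Unset Printing Implicit Defensive.

(* Variables are
   x_1 < ... < x_n, represented by their indices 1..n (nat order).
   var, low, high, flip are total functions; their values on the terminal
   node [one] are irrelevant. *)
Record cobdd (V : finType) := COBDD {
  one  : V;
  var  : V -> nat;
  low  : V -> V;
  high : V -> V;
  flip : V -> bool }.

Section Cobdd.
Variable V : finType.
Variable rho : cobdd V.
Local Notation one := (one rho).
Local Notation var := (var rho).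
Local Notation low := (low rho).
Local Notation high := (high rho).
Local Notation flip := (flip rho).

Definition edge : rel V :=
  fun u w => (u != one) && ((w == low u) || (w == high u)).

Definition reach (v : V) : {set V} := [set w | connect edge v w].

Definition cobdd_wf (n : nat) : Prop :=
  (forall v, v != one -> 1 <= var v <= n) /\
  (forall v, v != one -> high v != one -> var v < var (high v)) /\
  (forall v, v != one -> low v != one -> var v < var (low v)).

Definition sub_iso (u w : V) : Prop :=
  exists f : V -> V,
    [/\ {in reach u &, injective f}, f @: reach u = reach w, f u = w &
      {in reach u, forall z,
        (f z == one) = (z == one) /\
        (z != one -> [/\ var (f z) = var z, f (low z) = low (f z),
                         f (high z) = high (f z) & flip (f z) = flip z])}].

Definition cobdd_reduced : Prop :=
  (forall v, v != one -> ~ (low v = high v /\ flip v = false)) /\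
  (forall u w, sub_iso u w -> u = w).

(* height: length of the longest path from v to the terminal
   (fuel-based recursion; fuel #|V| suffices for ordered COBDDs) *)
Fixpoint height_f (f : nat) (v : V) : nat :=
  if v == one then 0 else
  match f with
  | 0 => 0
  | f'.+1 => (maxn (height_f f' (high v)) (height_f f' (low v))).+1
  end.
Definition height (v : V) : nat := height_f #|V| v.

(* semantics [[v, b]] at the assignment x (x j = value of x_j) *)
Fixpoint eval_f (f : nat) (x : nat -> bool) (v : V) (b : bool) : bool :=
  if v == one then ~~ b else
  match f with
  | 0 => false
  | f'.+1 => if x (var v) then eval_f f' x (high v) b
             else eval_f f' x (low v) (b (+) flip v)
  end.
Definition eval (x : nat -> bool) (v : V) (b : bool) : bool := eval_f #|V| x v b.

(* SReturn           ==  "return ret_b;"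
   SIf i h fl l      ==  "if (x[i] == 1) goto L_h;"  followed by
                         "else {ret_b = !ret_b; goto L_l;}"  if fl
                         "else goto L_l;"                    otherwise *)
Inductive stmt := SReturn | SIf of nat & V & bool & V.
Definition block := (V * stmt)%type.

Definition block_of (v : V) : block :=
  if v == one then (v, SReturn)
  else (v, SIf (var v).-1 (high v) (flip v) (low v)).

Fixpoint translate_f (f : nat) (v : V) (W : {set V}) : {set V} * seq block :=
  if v \in W then (W, [::]) else
  let W1 := v |: W in
  if v == one then (W1, [:: block_of v]) else
  match f with
  | 0 => (W1, [:: block_of v])
  | f'.+1 =>
      let (W2, o2) := translate_f f' (high v) W1 in
      let (W3, o3) := translate_f f' (low v) W2 in
      (W3, block_of v :: o2 ++ o3)
  end.
Definition translate (v : V) (W : {set V}) := translate_f #|V| v W.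

Fixpoint gen_from (W : {set V}) (vs : seq V) : seq block :=
  match vs with
  | [::] => [::]
  | v :: vs' => let (W', o) := translate v W in o ++ gen_from W' vs'
  end.
Definition gen_nodes (vs : seq V) : seq block := gen_from set0 vs.

Definition lookup (prog : seq block) (v : V) : option stmt :=
  omap snd (ohead [seq bl <- prog | bl.1 == v]).

(* runs prog arr v ret k r : started at label L_v with array x[] = arr and
   ret_b = ret, execution reaches and executes "return ret_b;" after exactly
   k executed statements (counting: condition test 1, each goto 1, the
   assignment ret_b = !ret_b 1, the return 1), returning r. *)
Inductive runs (prog : seq block) (arr : nat -> bool)
  : V -> bool -> nat -> bool -> Prop :=
| run_ret v ret :
    lookup prog v = Some SReturn -> runs prog arr v ret 1 ret
| run_hi v ret i h fl l k r :
    lookup prog v = Some (SIf i h fl l) -> arr i = true ->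
    runs prog arr h ret k r -> runs prog arr v ret (k + 2) r
| run_lo v ret i h fl l k r :
    lookup prog v = Some (SIf i h fl l) -> arr i = false ->
    runs prog arr l (if fl then ~~ ret else ret) k r ->
    runs prog arr v ret (k + 2 + fl) r.

End Cobdd.

From Pilot Require Import Defs.
From mathcomp Require Import all_boot zify.

(* Translate emits one block per node it has not seen yet, and since W is always
   closed under reachability, the nodes newly emitted by Translate(v, W) are
   exactly V_v \ W; chaining the calls gives one block per node of the union.
   Execution from L_v follows the semantics of the COBDD, each node costing
   at most three statements (test, optional negation of ret_b, goto), and
   strictly increasing variables make the recursion well founded. *)

Section Translation.
Context {V : finType} (rho : cobdd V).
Local Notation one := (Defs.one rho).
Local Notation var := (Defs.var rho).
Local Notation flip := (Defs.flip rho).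
Local Notation high := (Defs.high rho).
Local Notation low := (Defs.low rho).
Local Notation reach := (Defs.reach rho).

Lemma edge_oneF w : edge rho one w = false.
Proof. by rewrite /edge eqxx. Qed.

Lemma edge_high {u} : u != one -> edge rho u (high u).
Proof. by rewrite /edge => ->; rewrite eqxx orbT. Qed.

Lemma edge_low {u} : u != one -> edge rho u (low u).
Proof. by rewrite /edge => ->; rewrite eqxx. Qed.

Lemma path_one_last p : path (edge rho) one p -> last one p = one.
Proof. by case: p => //= y p; rewrite edge_oneF. Qed.

Lemma reach_refl u : u \in reach u.
Proof. by rewrite inE connect0. Qed.

Lemma card_reach_gt0 u : 0 < #|reach u|.
Proof. by apply/card_gt0P; exists u; apply: reach_refl. Qed.

Lemma reach_one : reach one = [set one].
Proof.
apply/setP => w; rewrite !inE; apply/idP/eqP => [/connectP [p Hp ->]|->].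
  exact: path_one_last.
exact: connect0.
Qed.

Lemma reach_trans u w : w \in reach u -> reach w \subset reach u.
Proof. by rewrite inE => Huw; apply/subsetP => z; rewrite !inE; apply: connect_trans. Qed.

Lemma reach_edge {u c} : edge rho u c -> reach c \subset reach u.
Proof. by move=> Huc; apply: reach_trans; rewrite inE connect1. Qed.

Lemma reach_split {u} : u != one -> reach u = u |: (reach (high u) :|: reach (low u)).
Proof.
move=> Nu; apply/setP => w; rewrite !inE; apply/idP/idP.
  case/connectP => [[|y p]] /=; first by move=> _ ->; rewrite eqxx.
  case/andP => /andP [_ Ey] Hp ->; apply/orP; right.
  by case/orP: Ey => /eqP Ey; apply/orP; [right|left]; apply/connectP; exists p; rewrite -?Ey.
case/or3P => [/eqP ->|Hw|Hw]; first exact: connect0.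
  exact: connect_trans (connect1 (edge_high Nu)) Hw.
exact: connect_trans (connect1 (edge_low Nu)) Hw.
Qed.

Definition closed_in (W A : {set V}) :=
  forall w, w \in W -> w \in A -> reach w \subset W.

Lemma closed_in0 (A : {set V}) : closed_in set0 A.
Proof. by move=> w; rewrite inE. Qed.

Lemma closed_inS {W A B : {set V}} : B \subset A -> closed_in W A -> closed_in W B.
Proof. by move=> /subsetP sBA clW w Ww Bw; apply: clW => //; apply: sBA. Qed.

Lemma closed_inU1 {W A : {set V}} {u} : u \notin A -> closed_in W A -> closed_in (u |: W) A.
Proof.
move=> uA clW w; rewrite in_setU1 => /orP [/eqP -> uA'|Ww Aw].
  by rewrite uA' in uA.
exact: subset_trans (clW w Ww Aw) (subsetUr _ _).
Qed.

Lemma closed_inU_reach {W A : {set V}} u : closed_in W A -> closed_in (W :|: reach u) A.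
Proof.
move=> clW w; rewrite in_setU => /orP [Ww Aw|/reach_trans ruw _].
  exact: subset_trans (clW w Ww Aw) (subsetUl _ _).
exact: subset_trans ruw (subsetUr _ _).
Qed.

Lemma closed_bigcup_reach vs : closed_in (\bigcup_(v <- vs) reach v) setT.
Proof.
elim: vs => [|v vs IH]; first by rewrite big_nil; apply: closed_in0.
by rewrite big_cons setUC; apply: closed_inU_reach.
Qed.

Lemma block_of_label w : (block_of rho w).1 = w.
Proof. by rewrite /block_of; case: ifP. Qed.

Lemma lookup_blocks s v :
  v \in s -> lookup (map (block_of rho) s) v = Some (block_of rho v).2.
Proof.
elim: s => // w s IH; rewrite inE /lookup /= block_of_label.
by case: eqVneq => [->|_] //= /IH.
Qed.

Section Ordered.
Hypothesis var_high : forall v, v != one -> high v != one -> var v < var (high v).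
Hypothesis var_low : forall v, v != one -> low v != one -> var v < var (low v).

Lemma edge_var_lt {u c} : edge rho u c -> c != one -> var u < var c.
Proof.
by case/andP => Nu /orP [] /eqP ->; [apply: var_low | apply: var_high].
Qed.

Lemma reach_var {a w} : w \in reach a -> w != one -> var a <= var w.
Proof.
rewrite inE => /connectP [p]; elim: p a => [|y p IH] a /=; first by move=> _ ->.
case/andP => ay Hp Ew Nw.
have Ny : y != one by apply: contraNneq Nw => Ey; rewrite Ew Ey path_one_last // -Ey.
exact: ltnW (leq_trans (edge_var_lt ay Ny) (IH y Hp Ew Nw)).
Qed.

Lemma notin_reach_child {u c} : u != one -> edge rho u c -> u \notin reach c.
Proof.
move=> Nu uc; apply/negP => cu.
have [Ec|Nc] := eqVneq c one; first by move: cu; rewrite Ec reach_one inE (negbTE Nu).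
by move: (reach_var cu Nu); rewrite leqNgt edge_var_lt.
Qed.

Lemma card_reach_child {u c} : u != one -> edge rho u c -> #|reach c| < #|reach u|.
Proof.
move=> Nu uc; apply: proper_card; rewrite properE reach_edge //=.
by apply/subsetPn; exists u; [apply: reach_refl | apply: notin_reach_child].
Qed.

Lemma translate_fP {f u} {W : {set V}} :
  #|reach u| <= f -> closed_in W (reach u) ->
  let: (W', o) := translate_f rho f u W in
  W' = W :|: reach u /\
  exists s, [/\ uniq s, s =i reach u :\: W & o = map (block_of rho) s].
Proof.
elim: f u W => [|f IH] u W le_f clW.
  by have := leq_trans (card_reach_gt0 u) le_f.
rewrite /=; case: ifPn => [uW|uNW].
  have /subsetP sub := clW u uW (reach_refl u).
  split; first by apply/esym/setUidPl/subsetP.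
  exists [::]; split => // z; rewrite in_nil inE.
  by apply/esym/negbTE/andP => -[/negP + /sub].
have [Eu|Nu] := eqVneq u one.
  rewrite Eu reach_one /=; split; first by rewrite setUC.
  exists [:: one]; split => // z; rewrite !inE.
  by rewrite andbC; case: eqVneq => [->|] //=; rewrite -Eu.
have [hi lo] := (edge_high Nu, edge_low Nu).
have le_hi : #|reach (high u)| <= f by rewrite -ltnS (leq_trans (card_reach_child Nu hi)).
have le_lo : #|reach (low u)| <= f by rewrite -ltnS (leq_trans (card_reach_child Nu lo)).
have cl_hi := closed_inU1 (notin_reach_child Nu hi) (closed_inS (reach_edge hi) clW).
have cl_lo := closed_inU_reach (high u)
  (closed_inU1 (notin_reach_child Nu lo) (closed_inS (reach_edge lo) clW)).
have := IH _ _ le_hi cl_hi; case: translate_f => _ o2 [-> [s2 [U2 M2 ->]]].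
have := IH _ _ le_lo cl_lo; case: translate_f => _ o3 [-> [s3 [U3 M3 ->]]].
rewrite (reach_split Nu); split; first by rewrite -!setUA setUCA.
exists (u :: s2 ++ s3); split; last by rewrite /= map_cat.
- rewrite /= cat_uniq U2 U3 mem_cat M2 M3 !(in_setD, in_setU1, in_setU) eqxx /= andbT.
  apply/hasPn => z; rewrite M3 M2 !(in_setD, in_setU1, in_setU).
  by case: (z \in W); case: (z == u); case: (z \in reach (high u)).
- move=> z; rewrite inE mem_cat M2 M3 !(in_setD, in_setU1, in_setU).
  case: eqVneq => [->|_] /=; first by rewrite uNW.
  by case: (z \in W); case: (z \in reach (high u)); case: (z \in reach (low u)).
Qed.

Lemma gen_fromP vs (W : {set V}) : closed_in W setT ->
  exists s, [/\ uniq s, s =i (\bigcup_(v <- vs) reach v) :\: W &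
                gen_from rho W vs = map (block_of rho) s].
Proof.
elim: vs W => [|v vs IH] W clW; first by exists [::]; split => // z; rewrite big_nil !inE andbF.
rewrite /= /translate.
have := translate_fP (max_card (reach v)) (closed_inS (subsetT (reach v)) clW).
case: translate_f => _ o1 [-> [s1 [U1 M1 ->]]].
have [s2 [U2 M2 ->]] := IH _ (closed_inU_reach v clW).
exists (s1 ++ s2); split; last by rewrite map_cat.
- rewrite cat_uniq U1 U2 andbT; apply/hasPn => z.
  by rewrite M2 M1 !(in_setD, in_setU); case: (z \in W); case: (z \in reach v).
- move=> z; rewrite mem_cat M1 M2 big_cons !(in_setD, in_setU).
  by case: (z \in W); case: (z \in reach v).
Qed.

Section Execution.
Context {prog : seq (block V)} {n : nat} {arr x : nat -> bool}.
Hypothesis var_range : forall v, v != one -> 1 <= var v <= n.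
Hypothesis arr_x : forall j, 1 <= j <= n -> arr j.-1 = x j.

Lemma runs_eval_f f v b : #|reach v| <= f ->
  {in reach v, forall w, lookup prog w = Some (block_of rho w).2} ->
  exists k, runs prog arr v (~~ b) k (eval_f rho f x v b) /\
            k <= 3 * height_f rho f v + 1.
Proof.
elim: f v b => [|f IH] v b le_f prog_v.
  by have := leq_trans (card_reach_gt0 v) le_f.
have [Ev|Nv] := eqVneq v one.
  have prog_at_v : lookup prog v = Some (SReturn V).
    by rewrite prog_v ?reach_refl // /block_of Ev eqxx.
  by exists 1; rewrite /= Ev eqxx; split=> //; apply: run_ret; rewrite -Ev.
have prog_at_v : lookup prog v = Some (SIf (var v).-1 (high v) (flip v) (low v)).
  by rewrite prog_v ?reach_refl // /block_of (negbTE Nv).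
rewrite /= (negbTE Nv) /=.
have arr_v : arr (var v).-1 = x (var v) by apply/arr_x/var_range.
have [hi lo] := (edge_high Nv, edge_low Nv).
case xv: (x (var v)).
  have [k [run_high le_k]] := IH (high v) b (leq_trans (card_reach_child Nv hi) le_f)
    (sub_in1 (subsetP (reach_edge hi)) prog_v).
  exists (k + 2); split; first by apply: (run_hi prog_at_v _ run_high); rewrite arr_v.
  have := leq_maxl (height_f rho f (high v)) (height_f rho f (low v)); lia.
have [k [run_low le_k]] := IH (low v) (b (+) flip v) (leq_trans (card_reach_child Nv lo) le_f)
  (sub_in1 (subsetP (reach_edge lo)) prog_v).
exists (k + 2 + flip v); split.
  apply: (run_lo prog_at_v); first by rewrite arr_v.
  by case: (flip v) run_low; rewrite ?addbT ?addbF.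
have := leq_maxr (height_f rho f (high v)) (height_f rho f (low v)).
by case: (flip v) le_k => /=; lia.
Qed.

End Execution.
End Ordered.
End Translation.

Theorem lemma4 :
  exists c : nat,
  forall (V : finType) (rho : cobdd V) (n : nat),
    cobdd_wf rho n -> cobdd_reduced rho ->
  forall (vs : seq V) (bs : seq bool), size bs = size vs ->
  let B := gen_nodes rho vs in
  let U := \bigcup_(v <- vs) reach rho v in
  size B = #|U| /\
  forall v, v \in U ->
    (exists j, j < size B /\ (nth (v, SReturn V) B j).1 = v) /\
    forall (x arr : nat -> bool) (b : bool),
      (forall j, 1 <= j <= n -> arr j.-1 = x j) ->
      exists k r, runs B arr v (~~ b) k r /\
                  k <= c * (height rho v).+1 /\
                  r = eval rho x v b.
Proof.
exists 3 => V rho n [var_range [var_high var_low]] _ vs _ _ B U.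
have [s [uniq_s mem_s B_s]] := gen_fromP rho var_high var_low vs set0 (closed_in0 rho setT).
have s_U : s =i U by move=> z; rewrite mem_s setD0.
rewrite /B /gen_nodes B_s size_map; split.
  by rewrite -(card_uniqP uniq_s); apply: eq_card.
move=> v Uv; split.
  exists (index v s); rewrite index_mem s_U; split => //.
  by rewrite (nth_map v) ?index_mem ?s_U // nth_index ?s_U // block_of_label.
move=> x arr b arr_x.
have prog_v : {in reach rho v, forall w,
    lookup (map (block_of rho) s) w = Some (block_of rho w).2}.
  move=> w vw; rewrite lookup_blocks // s_U.
  exact: subsetP (closed_bigcup_reach rho vs v Uv (in_setT v)) w vw.
have [k [run le_k]] :=
  runs_eval_f rho var_high var_low var_range arr_x #|V| v b (max_card _) prog_v.
by exists k, (eval rho x v b); rewrite /height mulnS; split => //; lia.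
Qed.
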